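(* Let $\mathcal{I}$ be an instance of the Square Strip Packing Problem, consider the bottom-left packing for an ordering attaining $h_{\text{BL}}^{\text{worst}}(\mathcal{I})$, let $h_{\text{BL}}$ be its height, and let $g\ge 0$ be a constant and $f$ the number such that the unoccupied space of this packing within the substrip $[0,W]\times[0,h_{\text{BL}}-g\,h_{\text{max}}]$ can be covered by $f$ copies of the squares of the instance (a union of translates in which each square of $\mathcal{I}$ is used at most $f$ times). Then $$\frac{h_{\text{BL}}^{\text{worst}}(\mathcal{I})}{h_{\text{OPT}}(\mathcal{I})}\ \le\ f+g+1 .$$
   Context: Square Strip Packing Problem: squares with side lengths at most $W$ are to be packed without rotation into the strip $[0,W]\times[0,\infty)$ with pairwise disjoint interiors; the height of a packing is the maximum top coordinate of a square, and $h_{\text{OPT}}(\mathcal{I})$ is the minimum height of a feasible packing. Bottom-left algorithm: given an ordering, place the first square at $(0,0)$ and each subsequent square at a feasible position $(x,y)$ (lower-left corner) with $(y,x)$ lexicographically minimal. $h_{\text{BL}}^{\text{worst}}(\mathcal{I})$ is the maximum over all orderings of the height of the bottom-left packing. $h_{\text{max}}$ is the largest side length of a square in $\mathcal{I}$. *)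

From HB Require Import structures.
From mathcomp Require Import all_boot all_order all_algebra all_fingroup.
From mathcomp Require Import classical_sets boolp reals.
Set Implicit Arguments. Unset Strict Implicit. Unset Printing Implicit Defensive.
Import Order.TTheory GRing.Theory Num.Theory.
Local Open Scope ring_scope.
Local Open Scope classical_set_scope.

Section SquarePacking.
Variable R : realType.

Definition pt2 := (R * R)%type.

Definition sq_closed (p : pt2) (s : R) : set pt2 :=
  [set q | p.1 <= q.1 <= p.1 + s /\ p.2 <= q.2 <= p.2 + s].

Definition sq_open (p : pt2) (s : R) : set pt2 :=
  [set q | p.1 < q.1 < p.1 + s /\ p.2 < q.2 < p.2 + s].

Definition instance (W : R) (n : nat) (s : 'I_n -> R) : Prop :=
  0 < W /\ forall i, 0 < s i <= W.

Definition in_strip (W : R) (si : R) (p : pt2) : Prop :=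
  0 <= p.1 /\ p.1 + si <= W /\ 0 <= p.2.

Definition feasible (W : R) (n : nat) (s : 'I_n -> R) (pos : 'I_n -> pt2)
  : Prop :=
  (forall i, in_strip W (s i) (pos i)) /\
  (forall i j, i != j -> sq_open (pos i) (s i) `&` sq_open (pos j) (s j) = set0).

Definition height (n : nat) (s : 'I_n -> R) (pos : 'I_n -> pt2) : R :=
  \big[Num.max/0]_(i < n) ((pos i).2 + s i).

Definition h_OPT (W : R) (n : nat) (s : 'I_n -> R) : R :=
  inf [set height s pos | pos in [set pos | feasible W s pos]].

Definition h_max (n : nat) (s : 'I_n -> R) : R := \big[Num.max/0]_(i < n) s i.

Definition feasible_pos (W : R) (n : nat) (s : 'I_n -> R)
  (pos : 'I_n -> pt2) (placed : pred 'I_n) (i : 'I_n) (p : pt2) : Prop :=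
  in_strip W (s i) p /\
  (forall j, placed j -> sq_open p (s i) `&` sq_open (pos j) (s j) = set0).

Definition lex_yx (p q : pt2) : Prop :=
  p.2 < q.2 \/ (p.2 = q.2 /\ p.1 <= q.1).

Definition BL_packing (W : R) (n : nat) (s : 'I_n -> R) (sigma : {perm 'I_n})
  (pos : 'I_n -> pt2) : Prop :=
  forall k : 'I_n,
    let placed := [pred i : 'I_n | [exists j : 'I_n, (j < k)%N && (sigma j == i)]] in
    feasible_pos W s pos placed (sigma k) (pos (sigma k)) /\
    forall p, feasible_pos W s pos placed (sigma k) p -> lex_yx (pos (sigma k)) p.

(* The unoccupied space of the packing pos within [0,W] x [0,H] is covered by
   f copies of the squares: for every square i there are f translates
   t i c (c < f), and every pt2 of [0,W] x [0,H] not in a packed square lies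
   in one of these translates. *)
Definition covered_by_copies (W : R) (n : nat) (s : 'I_n -> R)
  (pos : 'I_n -> pt2) (H : R) (f : nat) : Prop :=
  exists t : 'I_n -> 'I_f -> pt2,
    forall q : pt2,
      0 <= q.1 <= W -> 0 <= q.2 <= H ->
      (forall i, ~ sq_closed (pos i) (s i) q) ->
      exists i c, sq_closed (t i c) (s i) q.

End SquarePacking.

(* An area argument.  Let A be the total area of the squares.  Every feasible
   packing has height at least A / W and at least h_max, hence so does h_OPT.
   If the free space below height h - g h_max of a packing of height h is
   covered by f copies of the squares, then [0,W] x [0, h - g h_max] is
   covered by f + 1 copies, so W (h - g h_max) <= (f + 1) A <= (f + 1) W h_OPT,
   while g h_max <= g h_OPT. *)
From HB Require Import structures.
From mathcomp Require Import all_boot all_order all_algebra all_fingroup.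
From mathcomp Require Import classical_sets boolp reals.
From mathcomp Require Import ereal measure lebesgue_measure lebesgue_integral_fubini.
From mathcomp Require Import lra.
Set Implicit Arguments. Unset Strict Implicit. Unset Printing Implicit Defensive.
Import Order.TTheory GRing.Theory Num.Theory.
Local Open Scope ring_scope.
Local Open Scope classical_set_scope.

Section FiniteUnions.
Variable T : Type.

Lemma bigsetU_sub (I : Type) (r : seq I) (P : pred I) (F : I -> set T)
    (A : set T) :
  (forall i, P i -> F i `<=` A) -> \big[setU/set0]_(i <- r | P i) F i `<=` A.
Proof.
move=> FA; elim/big_rec: _ => [//|i B Pi BA x [/(FA i Pi)|/BA] //].
Qed.

Lemma sub_bigsetU (I : finType) (F : I -> set T) (i : I) :
  F i `<=` \big[setU/set0]_j F j.
Proof. by move=> x Fix; rewrite (bigD1 i) //; left. Qed.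

End FiniteUnions.

Lemma le_measure_bigsetU d (T : ringOfSetsType d) (R : realFieldType)
    (mu : {content set T -> \bar R}) (I : Type) (r : seq I) (P : pred I)
    (F : I -> set T) :
  (forall i, P i -> measurable (F i)) ->
  (mu (\big[setU/set0]_(i <- r | P i) F i) <= \sum_(i <- r | P i) mu (F i))%E.
Proof.
move=> mF; elim: r => [|j r IH]; first by rewrite !big_nil measure0.
rewrite !big_cons; case: ifP => Pj //.
apply: le_trans (measureU2 _ (mF j Pj) (bigsetU_measurable _ mF)) _.
exact: leeD (lexx _) IH.
Qed.

Lemma lebesgue_measure_itv_le (R : realType) (b1 b2 : bool) (a b : R) : a <= b ->
  lebesgue_measure [set` Interval (BSide b1 a) (BSide b2 b)] = (b - a)%:E.
Proof.
rewrite le_eqVlt => /orP[/eqP <-|ab].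
  by rewrite lebesgue_measure_itv /= lte_fin ltxx subrr.
by rewrite lebesgue_measure_itv /= lte_fin ab -EFinB.
Qed.

Section Area.
Variable R : realType.
Definition area := ((@lebesgue_measure R) \x (@lebesgue_measure R))%E.

Lemma area_itvX (b1 b2 b3 b4 : bool) (a1 c1 a2 c2 : R) : a1 <= c1 -> a2 <= c2 ->
  area ([set` Interval (BSide b1 a1) (BSide b2 c1)] `*`
        [set` Interval (BSide b3 a2) (BSide b4 c2)]) =
  ((c1 - a1) * (c2 - a2))%:E.
Proof.
move=> a1c1 a2c2; rewrite /area product_measure1E; try exact: measurable_itv.
move: (lebesgue_measure_itv_le b1 b2 a1c1) (lebesgue_measure_itv_le b3 b4 a2c2).
by rewrite /= => -> ->.
Qed.

Lemma sq_closedE (p : pt2 R) (a : R) :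
  sq_closed p a = `[p.1, p.1 + a] `*` `[p.2, p.2 + a].
Proof.
apply/seteqP; split => q /=; rewrite /sq_closed /= !in_itv /=.
  by move=> [-> ->].
by move=> [/andP[-> ->] /andP[-> ->]].
Qed.

Lemma sq_openE (p : pt2 R) (a : R) :
  sq_open p a = `]p.1, p.1 + a[ `*` `]p.2, p.2 + a[.
Proof.
apply/seteqP; split => q /=; rewrite /sq_open /= !in_itv /=.
  by move=> [-> ->].
by move=> [/andP[-> ->] /andP[-> ->]].
Qed.

Lemma measurable_sq_closed (p : pt2 R) (a : R) : measurable (sq_closed p a).
Proof. by rewrite sq_closedE; apply: measurableX; apply: measurable_itv. Qed.

Lemma measurable_sq_open (p : pt2 R) (a : R) : measurable (sq_open p a).
Proof. by rewrite sq_openE; apply: measurableX; apply: measurable_itv. Qed.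

Lemma area_sq_closed (p : pt2 R) (a : R) :
  0 <= a -> area (sq_closed p a) = (a ^+ 2)%:E.
Proof.
by move=> a0; rewrite sq_closedE area_itvX ?lerDl // !(addrC _ a) !addrK.
Qed.

Lemma area_sq_open (p : pt2 R) (a : R) :
  0 <= a -> area (sq_open p a) = (a ^+ 2)%:E.
Proof.
by move=> a0; rewrite sq_openE area_itvX ?lerDl // !(addrC _ a) !addrK.
Qed.

Lemma height_ge0 n (s : 'I_n -> R) (pos : 'I_n -> pt2 R) : 0 <= height s pos.
Proof.
by rewrite /height; elim/big_rec: _ => // i x _ x0; rewrite le_max x0 orbT.
Qed.

Lemma le_height n (s : 'I_n -> R) (pos : 'I_n -> pt2 R) i :
  (pos i).2 + s i <= height s pos.
Proof. by rewrite /height (bigD1 i) //= le_max lexx. Qed.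

Lemma h_max_le_height W n (s : 'I_n -> R) (pos : 'I_n -> pt2 R) :
  feasible W s pos -> h_max s <= height s pos.
Proof.
move=> [strip _]; apply: bigmax_le => [|i _]; first exact: height_ge0.
apply: le_trans (le_height s pos i); have [_ [_ y0]] := strip i.
by rewrite lerDr.
Qed.

Lemma feasible_area_le W n (s : 'I_n -> R) (pos : 'I_n -> pt2 R) :
  instance W s -> feasible W s pos -> \sum_i s i ^+ 2 <= W * height s pos.
Proof.
move=> [W0 sW] [strip disj].
have s0 i : 0 <= s i by have /andP[/ltW] := sW i.
pose U := \big[setU/set0]_(i < n) sq_open (pos i) (s i).
have U_box : U `<=` `[0, W] `*` `[0, height s pos].
  apply: bigsetU_sub => i _ q; rewrite /sq_open /= !in_itv /=.
  have := le_height s pos i; have [x0 [xW y0]] := strip i.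
  move=> top [/andP[x1 x2] /andP[y1 y2]].
  split; apply/andP; split.
  - exact: le_trans x0 (ltW x1).
  - exact: le_trans (ltW x2) xW.
  - exact: le_trans y0 (ltW y1).
  - exact: le_trans (ltW y2) top.
have areaU : area U = (\sum_i s i ^+ 2)%:E.
  transitivity (\sum_i area (sq_open (pos i) (s i)))%E.
    apply: measure_bigsetU_ord => [i|i j _ _ [q [qi qj]]].
      exact: measurable_sq_open.
    apply/eqP/negPn/negP => ij.
    by move: (disj i j ij) => /seteqP[/(_ q (conj qi qj))].
  by rewrite -sumEFin; apply: eq_bigr => i _; rewrite area_sq_open.
suff : (area U <= area (`[0%R, W] `*` `[0%R, height s pos]))%E.
  by rewrite areaU (area_itvX _ _ _ _ (ltW W0) (height_ge0 s pos)) !subr0 lee_fin.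
apply: (le_measure area) U_box; rewrite inE.
- by apply: bigsetU_measurable => i _; apply: measurable_sq_open.
- by apply: measurableX; apply: measurable_itv.
Qed.

Lemma covered_area_le W n (s : 'I_n -> R) (pos : 'I_n -> pt2 R) H f :
  instance W s -> covered_by_copies W s pos H f ->
  W * H <= (f%:R + 1) * \sum_i s i ^+ 2.
Proof.
move=> [W0 sW] [t cover].
have s0 i : 0 <= s i by have /andP[/ltW] := sW i.
have sum0 : 0 <= \sum_i s i ^+ 2 by apply: sumr_ge0 => i _; apply: sqr_ge0.
have [H0|H0] := leP 0 H; last first.
  apply: le_trans (mulr_ge0 (addr_ge0 (ler0n _ _) ler01) sum0).
  by rewrite ltW // pmulr_rlt0.
pose F (ic : 'I_n * option 'I_f) :=
  sq_closed (if ic.2 is Some c then t ic.1 c else pos ic.1) (s ic.1).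
have box_F : `[0, W] `*` `[0, H] `<=` \big[setU/set0]_ic F ic.
  move=> q /=; rewrite !in_itv /= => -[q1 q2].
  have [[i qi]|free] := pselect (exists i, sq_closed (pos i) (s i) q).
    exact: (@sub_bigsetU _ _ F (i, None)).
  have [i [c qc]] := cover q q1 q2 (fun i qi => free (ex_intro _ i qi)).
  exact: (@sub_bigsetU _ _ F (i, Some c)).
suff : (area (`[0%R, W] `*` `[0%R, H]) <= \sum_ic area (F ic))%E.
  rewrite (area_itvX _ _ _ _ (ltW W0) H0) !subr0.
  rewrite (eq_bigr (fun ic => (s ic.1 ^+ 2)%:E)) => [|ic _]; last first.
    exact: area_sq_closed.
  rewrite sumEFin lee_fin -(pair_bigA _ (fun i _ => s i ^+ 2)) /=.
  move=> /le_trans; apply.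
  rewrite mulr_sumr; apply: ler_sum => i _.
  by rewrite sumr_const card_option card_ord natr1 mulr_natl.
apply: le_trans _ (le_measure_bigsetU area _ (fun _ _ => measurable_sq_closed _ _)).
apply: (le_measure area) box_F; rewrite inE.
- by apply: measurableX; apply: measurable_itv.
- by apply: bigsetU_measurable => ic _; apply: measurable_sq_closed.
Qed.

Section OptimalHeight.
Variables (W : R) (n : nat) (s : 'I_n -> R).

Let heights := [set height s pos | pos in [set pos | feasible W s pos]].

Lemma h_OPT_ge0 : 0 <= h_OPT W s.
Proof.
rewrite /h_OPT -/heights; have [->|/set0P hne] := eqVneq heights set0.
  by rewrite inf0.
by apply: lb_le_inf => // _ [pos _ <-]; apply: height_ge0.
Qed.

(* Since [inf set0 = 0], a positive [h_OPT] certifies that some packing is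
   feasible. *)
Lemma le_h_OPT (b : R) : 0 < h_OPT W s ->
  (forall pos, feasible W s pos -> b <= height s pos) -> b <= h_OPT W s.
Proof.
rewrite /h_OPT -/heights => opt_gt0 lb.
have [heights0|/set0P hne] := eqVneq heights set0.
  by move: opt_gt0; rewrite heights0 inf0 ltxx.
by apply: lb_le_inf => // _ [pos feas <-]; apply: lb.
Qed.

End OptimalHeight.

End Area.

Theorem theorem14 (R : realType) (W : R) (n : nat) (s : 'I_n -> R)
  (sigma : {perm 'I_n}) (pos : 'I_n -> pt2 R) (g : R) (f : nat) :
  instance W s ->
  BL_packing W s sigma pos ->
  (forall (sigma' : {perm 'I_n}) (pos' : 'I_n -> pt2 R),
      BL_packing W s sigma' pos' -> height s pos' <= height s pos) ->
  0 <= g ->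
  covered_by_copies W s pos (height s pos - g * h_max s) f ->
  height s pos / h_OPT W s <= f%:R + g + 1.
Proof.
move=> inst _ _ g0 cover.
have W0 : 0 < W by case: inst.
have f1_ge0 : 0 <= f%:R + 1 :> R by rewrite addr_ge0.
have := h_OPT_ge0 W s; rewrite le_eqVlt => /orP[/eqP <-|opt_gt0].
  by rewrite invr0 mulr0 addr_ge0 // addr_ge0.
have hmax_le_opt : h_max s <= h_OPT W s.
  by apply: le_h_OPT opt_gt0 _ => pos' /h_max_le_height.
have area_le_opt : \sum_i s i ^+ 2 <= W * h_OPT W s.
  rewrite mulrC -ler_pdivrMr //; apply: le_h_OPT opt_gt0 _ => pos' feas.
  by rewrite ler_pdivrMr // mulrC; apply: feasible_area_le.
have low_le_opt : height s pos - g * h_max s <= (f%:R + 1) * h_OPT W s.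
  rewrite -(ler_pM2l W0) mulrCA; apply: le_trans (covered_area_le inst cover) _.
  exact: ler_wpM2l.
have := ler_wpM2l g0 hmax_le_opt.
rewrite ler_pdivrMr //; lra.
Qed.
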